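(* Let $d>2$, let $\alpha,\lambda\in\overline{\mathbb Q}$, and let $|\cdot|_v$ be an absolute value on $\overline{\mathbb Q}$. If $|\alpha|_v\ge2$ and $|\lambda|_v\le\frac12$, then for each $n_0\ge0$, $$\left|\lim_{n\to\infty}\frac{\log M_{n,v}}{d^n}-\frac{\log M_{n_0,v}}{d^{n_0}}\right|\le\frac{\log 2}{d^{n_0}(d-1)}.$$
   Context: Define $A_0=\alpha$, $B_0=1$, and for $n\ge0$, $A_{n+1}=A_n^d+\lambda B_n^d$, $B_{n+1}=A_nB_n^{d-1}$ (so $[A_n:B_n]$ is the $n$-th iterate of $\alpha$ under $z\mapsto(z^d+\lambda)/z$). Set $M_{n,v}=\max\{|A_n|_v,|B_n|_v\}$. *)

From HB Require Import structures.
From mathcomp Require Import all_boot all_order all_algebra all_field.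
From mathcomp Require Import all_classical all_reals all_analysis.
Set Implicit Arguments. Unset Strict Implicit. Unset Printing Implicit Defensive.
Import Order.TTheory GRing.Theory Num.Theory.
Local Open Scope ring_scope.

(* Qbar is modelled by algC, the algebraic closure of Q in mathcomp. *)

Definition is_absval (R : realType) (v : algC -> R) : Prop :=
  [/\ (forall x, 0 <= v x),
      (forall x, v x = 0 <-> x = 0),
      (forall x y, v (x * y) = v x * v y) &
      (forall x y, v (x + y) <= v x + v y)].

Fixpoint AB (d : nat) (alpha lambda : algC) (n : nat) : algC * algC :=
  match n with
  | 0 => (alpha, 1)
  | n'.+1 => let: (a, b) := AB d alpha lambda n' in
             (a ^+ d + lambda * b ^+ d, a * b ^+ d.-1)
  end.

Definition A d alpha lambda n := (AB d alpha lambda n).1.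
Definition B d alpha lambda n := (AB d alpha lambda n).2.

Definition M (R : realType) (v : algC -> R) d alpha lambda n : R :=
  Num.max (v (A d alpha lambda n)) (v (B d alpha lambda n)).

From HB Require Import structures.
From mathcomp Require Import all_boot all_order all_algebra all_field.
From mathcomp Require Import all_classical all_reals all_analysis.
From mathcomp Require Import ring lra zify.
Set Implicit Arguments. Unset Strict Implicit. Unset Printing Implicit Defensive.
Import Order.TTheory GRing.Theory Num.Theory numFieldNormedType.Exports.
Local Open Scope ring_scope.

(* As long as |B_n| <= |A_n|/2 and |A_n| >= 2, the term A_n^d dominates
   A_{n+1} = A_n^d + lambda B_n^d, so M_{n+1} = |A_{n+1}| lies within a factor
   2 of M_n^d and log M_{n+1} - d log M_n lies in [-log 2, log 2].  Dividing by
   d^(n+1), the increments of log M_n / d^n are bounded by log 2 / d^(n+1);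
   summing this geometric tail gives both the convergence and the bound. *)

Section AbsoluteValue.
Variables (R : realType) (v : algC -> R).
Hypothesis hv : is_absval v.

Lemma absv_ge0 x : 0 <= v x. Proof. by case: hv. Qed.
Lemma absvM x y : v (x * y) = v x * v y. Proof. by case: hv. Qed.
Lemma ler_absvD x y : v (x + y) <= v x + v y. Proof. by case: hv. Qed.

Lemma absv1 : v 1 = 1.
Proof.
have v1_neq0 : v 1 != 0.
  by apply/eqP; case: hv => _ v0 _ _ /v0; apply/eqP; exact: oner_neq0.
by apply: (mulfI v1_neq0); rewrite -absvM !mulr1.
Qed.

Lemma absvN x : v (- x) = v x.
Proof.
have vN1_sqr : v (-1) * v (-1) = 1 by rewrite -absvM mulrNN mulr1 absv1.
have vN1 : v (-1) = 1.
  have := absv_ge0 (-1); have [|//|//] := ltrgtP (v (-1)) 1; nra.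
by rewrite -mulN1r absvM vN1 mul1r.
Qed.

Lemma lerB_absvD x y : v x - v y <= v (x + y).
Proof. by have := ler_absvD (x + y) (- y); rewrite addrK absvN; lra. Qed.

Lemma absvX x n : v (x ^+ n) = v x ^+ n.
Proof. by elim: n => [|n IH]; rewrite ?expr0 ?absv1 // !exprS absvM IH. Qed.

End AbsoluteValue.

Lemma ler_4exprn (R : realDomainType) (x y : R) k :
  0 <= y -> 2 * y <= x -> (2 <= k)%N -> 4 * y ^+ k <= x ^+ k.
Proof.
move=> y0 hyx hk.
have two_k : 4 <= 2 ^+ k :> R.
  have : 2 ^+ 2 <= 2 ^+ k :> R by apply: ler_weXn2l; rewrite ?ler1n.
  by rewrite expr2; lra.
have x0 : 0 <= x by apply: le_trans hyx; rewrite mulr_ge0.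
have : (2 * y) ^+ k <= x ^+ k by rewrite lerXn2r ?nnegrE ?mulr_ge0.
apply: le_trans; rewrite exprMn ler_wpM2r // exprn_ge0 //.
Qed.

Lemma ln_sandwich (R : realType) (x y : R) (d : nat) : 0 < x ->
  x ^+ d / 2 <= y -> y <= 2 * x ^+ d -> `|ln y - d%:R * ln x| <= ln 2.
Proof.
move=> x0 lo hi.
have xd0 : 0 < x ^+ d by exact: exprn_gt0.
have ln_lo : ln (x ^+ d / 2) <= ln y.
  by rewrite ler_ln ?posrE ?divr_gt0 //; lra.
have ln_hi : ln y <= ln (2 * x ^+ d).
  by rewrite ler_ln ?posrE ?mulr_gt0 //; lra.
rewrite lnM ?lnV ?posrE ?invr_gt0 // lnXn // in ln_lo.
rewrite lnM ?posrE // lnXn // in ln_hi.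
by rewrite mulr_natl ler_norml; apply/andP; split; lra.
Qed.

Lemma cvg_geometric_increments (R : realType) (u : R ^nat) (C D : R) :
  1 < D -> (forall n, `|u n.+1 - u n| <= C / D ^+ n.+1) ->
  exists L, (u @ \oo --> L)%classic /\
            forall n, `|L - u n| <= C / (D ^+ n * (D - 1)).
Proof.
move=> D1 hu.
have Dn0 n : 0 < D ^+ n by apply: exprn_gt0; lra.
have C0 : 0 <= C.
  have := le_trans (normr_ge0 _) (hu 0); rewrite expr1.
  by rewrite pmulr_lge0 // invr_gt0; lra.
pose c n := C / (D ^+ n * (D - 1)).
have c0 n : 0 <= c n by rewrite divr_ge0 // mulr_ge0 //; [exact: ltW | lra].
have cS n : c n - c n.+1 = C / D ^+ n.+1.
  by rewrite /c exprS; field; apply/and3P; split; apply/eqP; have := Dn0 n; lra.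
have c_cvg : (c @ \oo --> 0)%classic.
  have -> : c = geometric (C / (D - 1)) D^-1.
    apply/funext => n; rewrite /c /geometric /= exprVn; field.
    by apply/andP; split; apply/eqP; have := Dn0 n; lra.
  apply: cvg_geometric; rewrite ger0_norm ?invr_ge0 ?invf_lt1 //; lra.
pose b n := u n + c n; pose e n := u n - c n.
have b_dec : nonincreasing_seq b.
  apply/nonincreasing_seqP => n; rewrite /b.
  by have := hu n; rewrite ler_norml => /andP[_]; have := cS n; lra.
have e_inc : nondecreasing_seq e.
  apply/nondecreasing_seqP => n; rewrite /e.
  by have := hu n; rewrite ler_norml => /andP[+ _]; have := cS n; lra.
have b_cvg : cvgn b.
  apply: nonincreasing_is_cvgn => //; exists (e 0) => _ [n _ <-].
  by have := e_inc 0 n (leq0n n); have := c0 n; rewrite /b /e; lra.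
have u_cvg : (u @ \oo --> limn b)%classic.
  have -> : u = b - c by apply/funext => n; rewrite /b /= addrK.
  by rewrite -[limn b]subr0; exact: cvgB.
have e_cvg : (e @ \oo --> limn b)%classic.
  by rewrite -[limn b]subr0; exact: cvgB.
exists (limn b); split => // n.
have ub := nonincreasing_cvgn_ge b_dec b_cvg n.
have lb := nondecreasing_cvgn_le e_inc (cvgP _ e_cvg) n.
rewrite (cvg_lim _ e_cvg) // /e in lb.
by rewrite ler_distl; apply/andP; split; rewrite /b in ub; rewrite -/(c n); lra.
Qed.

Lemma AS d alpha lambda n :
  A d alpha lambda n.+1 = A d alpha lambda n ^+ d + lambda * B d alpha lambda n ^+ d.
Proof. by rewrite /A /B /=; case: AB. Qed.

Lemma BS d alpha lambda n :
  B d alpha lambda n.+1 = A d alpha lambda n * B d alpha lambda n ^+ d.-1.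
Proof. by rewrite /A /B /=; case: AB. Qed.

Section Iteration.
Variables (R : realType) (v : algC -> R) (d : nat) (alpha lambda : algC).
Hypotheses (hv : is_absval v) (hd : (2 < d)%N) (hlambda : v lambda <= 1 / 2).

Definition dominates (a b : algC) := 2 <= v a /\ 2 * v b <= v a.

Lemma absv_iterA_bounds a b : 2 * v b <= v a ->
  v a ^+ d / 2 <= v (a ^+ d + lambda * b ^+ d) <= 2 * v a ^+ d.
Proof.
move=> hab.
have b_small : 4 * v b ^+ d <= v a ^+ d.
  by apply: ler_4exprn (absv_ge0 hv b) hab (ltnW hd).
have tail : v (lambda * b ^+ d) <= v a ^+ d / 8.
  rewrite absvM // absvX //.
  have := ler_wpM2r (exprn_ge0 d (absv_ge0 hv b)) hlambda; lra.
have up := ler_absvD hv (a ^+ d) (lambda * b ^+ d).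
have low := lerB_absvD hv (a ^+ d) (lambda * b ^+ d).
have ad0 := exprn_ge0 d (absv_ge0 hv a).
by rewrite absvX // in up low; apply/andP; split; lra.
Qed.

Lemma dominates_step a b : dominates a b ->
  dominates (a ^+ d + lambda * b ^+ d) (a * b ^+ d.-1).
Proof.
move=> [ha hab]; have /andP[lo _] := absv_iterA_bounds hab.
have a_big : 4 * 1 ^+ d <= v a ^+ d by apply: ler_4exprn => //; [lra | exact: ltnW].
have b_small : 4 * v b ^+ d.-1 <= v a ^+ d.-1.
  by apply: ler_4exprn (absv_ge0 hv b) hab _; lia.
have split_d : v a ^+ d = v a * v a ^+ d.-1 by rewrite -exprS prednK //; lia.
rewrite expr1n in a_big; split; first lra.
by rewrite absvM // absvX //; have := absv_ge0 hv b; nra.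
Qed.

Hypothesis halpha : 2 <= v alpha.

Lemma dominates_AB n : dominates (A d alpha lambda n) (B d alpha lambda n).
Proof.
elim: n => [|n IH]; last by rewrite AS BS; exact: dominates_step.
by rewrite /dominates /A /B /= absv1 // mulr1.
Qed.

Lemma M_absvA n : M v d alpha lambda n = v (A d alpha lambda n).
Proof.
rewrite /M max_l //; have [_ hab] := dominates_AB n.
by have := absv_ge0 hv (B d alpha lambda n); lra.
Qed.

Lemma ln_M_succ n :
  `|ln (M v d alpha lambda n.+1) - d%:R * ln (M v d alpha lambda n)| <= ln 2.
Proof.
have [ha hab] := dominates_AB n; have /andP[lo hi] := absv_iterA_bounds hab.
by rewrite !M_absvA AS; apply: ln_sandwich => //; lra.
Qed.

End Iteration.

Theorem proposition6p1 (R : realType) (v : algC -> R) (d : nat)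
    (alpha lambda : algC) (n0 : nat) :
  is_absval v -> (2 < d)%N -> 2 <= v alpha -> v lambda <= 1 / 2 ->
  exists L : R,
    ((fun n : nat => ln (M v d alpha lambda n) / (d%:R ^+ n)) @ \oo --> L)%classic /\
    `|L - ln (M v d alpha lambda n0) / (d%:R ^+ n0)|
      <= ln 2 / (d%:R ^+ n0 * (d%:R - 1)).
Proof.
move=> hv hd halpha hlambda.
pose u n := ln (M v d alpha lambda n) / d%:R ^+ n.
have d_gt1 : 1 < d%:R :> R by rewrite ltr1n; lia.
have dn_gt0 n : 0 < d%:R ^+ n :> R by apply: exprn_gt0; lra.
have u_step n : `|u n.+1 - u n| <= ln 2 / d%:R ^+ n.+1.
  rewrite /u; set x := ln (M v d alpha lambda n).
  set y := ln (M v d alpha lambda n.+1).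
  have -> : y / d%:R ^+ n.+1 - x / d%:R ^+ n = (y - d%:R * x) / d%:R ^+ n.+1.
    by rewrite exprS; field; apply/andP; split; apply/eqP; have := dn_gt0 n; lra.
  rewrite normrM [X in _ * X]ger0_norm ?invr_ge0 ?(ltW (dn_gt0 _)) //.
  by apply: ler_wpM2r (ln_M_succ hv hd hlambda halpha n); rewrite invr_ge0 ltW.
have [L [u_cvg u_near]] := cvg_geometric_increments d_gt1 u_step.
by exists L; split; [exact: u_cvg | exact: u_near].
Qed.
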